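(* Let $\langle P[(\bot_k\otimes R[x_i])⅋(x_j^\perp\otimes Q)]\mid x_i\odot x_j^\perp,\Gamma\rangle$ be a proof graph, where $x$ is an arbitrary atom or a unit, and $x^\perp$ its dual. Then $\langle P[\bot_k\otimes(R[x_i]⅋(x_j^\perp\otimes Q))]\mid x_i\odot x_j^\perp,\Gamma\rangle$ is equivalent to it.
   Context: Write ⅋ for par and $\odot$ for the cut connective. A proof graph $\langle P\mid\Gamma\rangle$ is an MLL linking tree $P$ (generated by $\mathsf1\mid a\otimes a^\perp\mid a^\perp\otimes a\mid\bot\otimes L\mid L\otimes\bot\mid L⅋L$) with a sequent $\Gamma$ (cuts $A\odot A^\perp$ allowed as roots) sharing the same leaves, such that every switching (deleting one child edge per ⅋-node; $\odot$ acts like $\otimes$) is connected and acyclic. Equivalence $\sim$ is generated by commutativity/associativity of ⅋ in the linking, commutativity of $\otimes$, $\bot_i\otimes(Q\otimes\bot_j)\sim(\bot_i\otimes Q)\otimes\bot_j$, and $Q⅋(R\otimes\bot_i)\sim(Q⅋R)\otimes\bot_i$ under the side condition that in every extended switching with respect to $\bot_i$ (switching with the edge from $\bot_i$ to its parent also removed) no node of $Q$ is connected to $\bot_i$. $P[\;],R[\;]$ are linking contexts, $Q$ a linking; indices distinguish leaf occurrences. *)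

From Stdlib Require Import List Bool Arith Permutation Relations.
Import ListNotations.

(* Pos a = atom a, Neg a = a^perp, One = 1, Bot = bot *)
Inductive lit : Type := Pos (a : nat) | Neg (a : nat) | One | Bot.

Definition dual_lit (x : lit) : lit :=
  match x with Pos a => Neg a | Neg a => Pos a | One => Bot | Bot => One end.

Definition atom_or_unit (x : lit) : Prop :=
  match x with Neg _ => False | _ => True end.

(* a leaf occurrence: a literal together with an index *)
Definition leaf : Type := (lit * nat)%type.

Inductive lk : Type :=
| LLeaf (l : leaf)
| LTens (A B : lk)
| LPar (A B : lk).

Inductive is_linking : lk -> Prop :=
| il_one i : is_linking (LLeaf (One, i))
| il_ax a i j : is_linking (LTens (LLeaf (Pos a, i)) (LLeaf (Neg a, j)))
| il_xa a i j : is_linking (LTens (LLeaf (Neg a, i)) (LLeaf (Pos a, j)))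
| il_botl i L : is_linking L -> is_linking (LTens (LLeaf (Bot, i)) L)
| il_botr i L : is_linking L -> is_linking (LTens L (LLeaf (Bot, i)))
| il_par L M : is_linking L -> is_linking M -> is_linking (LPar L M).

Fixpoint lk_leaves (P : lk) : list leaf :=
  match P with
  | LLeaf l => [l]
  | LTens A B | LPar A B => lk_leaves A ++ lk_leaves B
  end.

Inductive ctx : Type :=
| Hole
| CTensL (C : ctx) (B : lk)
| CTensR (A : lk) (C : ctx)
| CParL (C : ctx) (B : lk)
| CParR (A : lk) (C : ctx).

Fixpoint plug (C : ctx) (X : lk) : lk :=
  match C with
  | Hole => X
  | CTensL C' B => LTens (plug C' X) B
  | CTensR A C' => LTens A (plug C' X)
  | CParL C' B => LPar (plug C' X) B
  | CParR A C' => LPar A (plug C' X)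
  end.

(* address of the hole (reversed path; false = left child, true = right) *)
Fixpoint hpath (C : ctx) (p : list bool) : list bool :=
  match C with
  | Hole => p
  | CTensL C' _ | CParL C' _ => hpath C' (false :: p)
  | CTensR _ C' | CParR _ C' => hpath C' (true :: p)
  end.

Inductive fm : Type :=
| FLit (l : leaf)
| FTens (A B : fm)
| FPar (A B : fm).

Fixpoint is_dual (A B : fm) : Prop :=
  match A, B with
  | FLit (x, _), FLit (y, _) => y = dual_lit x
  | FTens A1 A2, FPar B1 B2 => is_dual A1 B1 /\ is_dual A2 B2
  | FPar A1 A2, FTens B1 B2 => is_dual A1 B1 /\ is_dual A2 B2
  | _, _ => False
  end.

(* a sequent item: a formula, or a cut A (.) A^perp (only as a root) *)
Inductive item : Type :=
| IForm (A : fm)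
| ICut (A B : fm).

Definition sequent : Type := list item.

Definition wf_sequent (G : sequent) : Prop :=
  Forall (fun it => match it with IForm _ => True | ICut A B => is_dual A B end) G.

Fixpoint fm_leaves (A : fm) : list leaf :=
  match A with
  | FLit l => [l]
  | FTens A B | FPar A B => fm_leaves A ++ fm_leaves B
  end.

Definition item_leaves (it : item) : list leaf :=
  match it with IForm A => fm_leaves A | ICut A B => fm_leaves A ++ fm_leaves B end.

Definition seq_leaves (G : sequent) : list leaf := flat_map item_leaves G.

(* nodes: shared leaves, internal nodes of the linking (by address),
   internal nodes of the n-th sequent item (by address) *)
Inductive node : Type :=
| NLeaf (l : leaf)
| NLk (p : list bool)
| NSq (n : nat) (p : list bool).

Definition lit_eq_dec (x y : lit) : {x = y} + {x <> y}.
Proof. decide equality; apply Nat.eq_dec. Defined.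

Definition node_eq_dec (u v : node) : {u = v} + {u <> v}.
Proof.
  decide equality;
  try (apply list_eq_dec; apply bool_dec);
  try apply Nat.eq_dec.
  destruct l, l0; decide equality; try apply Nat.eq_dec; apply lit_eq_dec.
Defined.

(* labelled edge (child, parent, label); label = Some b iff the parent is a
   par node and the child is its left (b = false) / right (b = true) child *)
Definition ledge : Type := (node * node * option bool)%type.

Definition lk_root (p : list bool) (P : lk) : node :=
  match P with LLeaf l => NLeaf l | _ => NLk p end.

Fixpoint lk_edges (p : list bool) (P : lk) : list ledge :=
  match P with
  | LLeaf _ => []
  | LTens A B =>
      (lk_root (false :: p) A, NLk p, None) :: (lk_root (true :: p) B, NLk p, None)
        :: lk_edges (false :: p) A ++ lk_edges (true :: p) B
  | LPar A B =>
      (lk_root (false :: p) A, NLk p, Some false) :: (lk_root (true :: p) B, NLk p, Some true)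
        :: lk_edges (false :: p) A ++ lk_edges (true :: p) B
  end.

Fixpoint lk_nodes (p : list bool) (P : lk) : list node :=
  match P with
  | LLeaf l => [NLeaf l]
  | LTens A B | LPar A B => NLk p :: lk_nodes (false :: p) A ++ lk_nodes (true :: p) B
  end.

Definition fm_root (n : nat) (p : list bool) (A : fm) : node :=
  match A with FLit l => NLeaf l | _ => NSq n p end.

Fixpoint fm_edges (n : nat) (p : list bool) (A : fm) : list ledge :=
  match A with
  | FLit _ => []
  | FTens A1 A2 =>
      (fm_root n (false :: p) A1, NSq n p, None) :: (fm_root n (true :: p) A2, NSq n p, None)
        :: fm_edges n (false :: p) A1 ++ fm_edges n (true :: p) A2
  | FPar A1 A2 =>
      (fm_root n (false :: p) A1, NSq n p, Some false) :: (fm_root n (true :: p) A2, NSq n p, Some true)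
        :: fm_edges n (false :: p) A1 ++ fm_edges n (true :: p) A2
  end.

Fixpoint fm_nodes (n : nat) (p : list bool) (A : fm) : list node :=
  match A with
  | FLit l => [NLeaf l]
  | FTens A1 A2 | FPar A1 A2 => NSq n p :: fm_nodes n (false :: p) A1 ++ fm_nodes n (true :: p) A2
  end.

(* a cut acts like a tensor *)
Definition item_edges (n : nat) (it : item) : list ledge :=
  match it with
  | IForm A => fm_edges n [] A
  | ICut A B =>
      (fm_root n [false] A, NSq n [], None) :: (fm_root n [true] B, NSq n [], None)
        :: fm_edges n [false] A ++ fm_edges n [true] B
  end.

Definition item_nodes (n : nat) (it : item) : list node :=
  match it with
  | IForm A => fm_nodes n [] A
  | ICut A B => NSq n [] :: fm_nodes n [false] A ++ fm_nodes n [true] B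
  end.

Fixpoint seq_edges (n : nat) (G : sequent) : list ledge :=
  match G with [] => [] | it :: G' => item_edges n it ++ seq_edges (S n) G' end.

Fixpoint seq_nodes (n : nat) (G : sequent) : list node :=
  match G with [] => [] | it :: G' => item_nodes n it ++ seq_nodes (S n) G' end.

Definition pg_nodes (P : lk) (G : sequent) : list node := lk_nodes [] P ++ seq_nodes 0 G.
Definition pg_edges (P : lk) (G : sequent) : list ledge := lk_edges [] P ++ seq_edges 0 G.

(* a switching chooses, for every par node p, which child edge to keep
   (s p = false: keep the left one; true: keep the right one) *)
Definition switching : Type := node -> bool.

Definition kept (s : switching) (e : ledge) : bool :=
  match e with
  | (_, p, None) => true
  | (_, p, Some b) => Bool.eqb b (s p)
  end.

Definition sw_edges (s : switching) (E : list ledge) : list (node * node) :=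
  map (fun e => (fst (fst e), snd (fst e))) (filter (kept s) E).

Inductive walk (E : list (node * node)) : node -> node -> Prop :=
| walk_refl u : walk E u u
| walk_step u v w : (In (u, v) E \/ In (v, u) E) -> walk E v w -> walk E u w.

Definition connected (V : list node) (E : list (node * node)) : Prop :=
  forall u v, In u V -> In v V -> walk E u v.

Fixpoint trail (E : list (node * node)) (u v : node) (idx : list nat) : Prop :=
  match idx with
  | [] => u = v
  | k :: r => exists w, (nth_error E k = Some (u, w) \/ nth_error E k = Some (w, u))
                        /\ trail E w v r
  end.

Definition acyclic (E : list (node * node)) : Prop :=
  ~ exists u idx, idx <> [] /\ NoDup idx /\ trail E u u idx.

Definition proof_graph (P : lk) (G : sequent) : Prop :=
  is_linking P /\ wf_sequent G /\
  NoDup (lk_leaves P) /\ Permutation (lk_leaves P) (seq_leaves G) /\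
  forall s : switching,
    connected (pg_nodes P G) (sw_edges s (pg_edges P G)) /\
    acyclic (sw_edges s (pg_edges P G)).

(* extended switching w.r.t. bot_i: additionally remove the edge from the leaf
   bot_i to its parent in the linking *)
Definition ext_sw_edges (s : switching) (i : nat) (P : lk) (G : sequent)
  : list (node * node) :=
  sw_edges s (filter (fun e => if node_eq_dec (fst (fst e)) (NLeaf (Bot, i))
                               then false else true) (lk_edges [] P))
  ++ sw_edges s (seq_edges 0 G).

(* side condition of  Q par (R (x) bot_i) ~ (Q par R) (x) bot_i  in context C:
   in every extended switching w.r.t. bot_i of <C[Q par (R (x) bot_i)] | G>,
   no node of Q is connected to bot_i *)
Definition rewire_side (C : ctx) (Q R : lk) (i : nat) (G : sequent) : Prop :=
  forall (s : switching) (u : node),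
    In u (lk_nodes (false :: hpath C []) Q) ->
    ~ walk (ext_sw_edges s i (plug C (LPar Q (LTens R (LLeaf (Bot, i))))) G) u (NLeaf (Bot, i)).

Inductive lk_step (G : sequent) : lk -> lk -> Prop :=
| st_parC C A B : lk_step G (plug C (LPar A B)) (plug C (LPar B A))
| st_parA C A B D : lk_step G (plug C (LPar A (LPar B D))) (plug C (LPar (LPar A B) D))
| st_tensC C A B : lk_step G (plug C (LTens A B)) (plug C (LTens B A))
| st_botA C Q i j :
    lk_step G (plug C (LTens (LLeaf (Bot, i)) (LTens Q (LLeaf (Bot, j)))))
              (plug C (LTens (LTens (LLeaf (Bot, i)) Q) (LLeaf (Bot, j))))
| st_rewire C Q R i :
    rewire_side C Q R i G ->
    lk_step G (plug C (LPar Q (LTens R (LLeaf (Bot, i)))))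
              (plug C (LTens (LPar Q R) (LLeaf (Bot, i)))).

Definition pgraph : Type := (lk * sequent)%type.

Definition pg_step (X Y : pgraph) : Prop :=
  snd X = snd Y /\ proof_graph (fst X) (snd X) /\ proof_graph (fst Y) (snd Y) /\
  lk_step (snd X) (fst X) (fst Y).

Definition pg_equiv : pgraph -> pgraph -> Prop := clos_refl_sym_trans pgraph pg_step.

From Stdlib Require Import List Bool Arith Permutation Relations Lia Classical FinFun.
Import ListNotations.

(* The first proof graph becomes the second by commuting the tensor with [⊥],
   commuting the par, one rewiring step
     [(x_j^⊥ ⊗ Q) ⅋ (R[x_i] ⊗ ⊥)  ~  ((x_j^⊥ ⊗ Q) ⅋ R[x_i]) ⊗ ⊥]
   and two more commutations.  A commutation only renames the nodes below it, so
   it maps switching graphs isomorphically to switching graphs.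

   In the rewiring step let [a] be the par, [b] the tensor, [q] and [r] the roots
   of [x_j^⊥ ⊗ Q] and of [R[x_i]], and [M] the rest of the graph.  Acyclicity of
   the old switchings separates, inside [M], the components of [a], [r] and [⊥],
   and connectedness forces [r] and [q] into one component of [M]; these facts
   make every new switching a tree as well.  The side condition holds because of
   the cut: a walk from [⊥] into [x_j^⊥ ⊗ Q] could be rerouted, by switching the
   pars inside the two subtrees, to [q], then through [x_j^⊥] and the cut to
   [x_i] and up to [r], closing a cycle with the edges [r - b - ⊥]. *)

(** * Walks, trails and acyclicity *)

Section Walks.

Variable E : list (node * node).

Lemma walk_trans u v w : walk E u v -> walk E v w -> walk E u w.
Proof. induction 1; intros; auto. econstructor; eauto. Qed.

Lemma walk_edge u v : In (u, v) E -> walk E u v.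
Proof. intros; econstructor; [left; eauto | constructor]. Qed.

Lemma walk_sym u v : walk E u v -> walk E v u.
Proof.
  induction 1; [constructor|].
  apply walk_trans with v; auto. econstructor; [|constructor]. tauto.
Qed.

Lemma walk_invariant (S : node -> Prop) :
  (forall u v, In (u, v) E -> S u <-> S v) -> forall u v, walk E u v -> S u -> S v.
Proof.
  intros HS u v W; induction W as [|u v w [H|H] W IH]; auto;
    apply HS in H; tauto.
Qed.

End Walks.

Lemma walk_lift E E' :
  (forall u v, In (u, v) E -> walk E' u v) -> forall x y, walk E x y -> walk E' x y.
Proof.
  intros H x y W; induction W as [|u v w [Huv|Huv] W IH]; [constructor| |];
    apply walk_trans with v; auto; apply walk_sym; auto.
Qed.

Lemma walk_incl E E' : incl E E' -> forall x y, walk E x y -> walk E' x y.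
Proof. intros I; apply walk_lift; intros; apply walk_edge; auto. Qed.

Lemma walk_app_avoid E E' x y :
  (forall u v, In (u, v) E' -> ~ walk E x u /\ ~ walk E x v) ->
  walk (E' ++ E) x y -> walk E x y.
Proof.
  intros HE' W.
  apply (walk_invariant _ (walk E x)) in W; [exact W| |constructor].
  intros u v H. apply in_app_or in H as [H|H].
  - apply HE' in H; tauto.
  - split; intros; eapply walk_trans; eauto using walk_edge, walk_sym.
Qed.

Definition pair_map (f : node -> node) (e : node * node) : node * node :=
  (f (fst e), f (snd e)).

Lemma walk_map f E u v : walk E u v -> walk (map (pair_map f) E) (f u) (f v).
Proof.
  induction 1 as [|u v w H W IH]; [constructor|].
  apply walk_step with (f v); auto.
  destruct H; [left|right]; apply (in_map (pair_map f)) in H; exact H.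
Qed.

Lemma trail_split E u w i1 i2 :
  trail E u w (i1 ++ i2) -> exists v, trail E u v i1 /\ trail E v w i2.
Proof.
  revert u; induction i1; simpl; intros u H; [exists u; simpl; auto|].
  destruct H as [y [Hy Ht]]. destruct (IHi1 _ Ht) as [v [T1 T2]].
  exists v; split; auto. exists y; auto.
Qed.

Lemma trail_walk E u v idx : trail E u v idx -> walk E u v.
Proof.
  revert u; induction idx; simpl; intros u H; [subst; constructor|].
  destruct H as [y [Hy Ht]]. apply walk_step with y; auto.
  destruct Hy; [left|right]; eapply nth_error_In; eauto.
Qed.

(* When the walk reuses an edge, cut out the part between the two uses. *)
Lemma walk_trail E u v : walk E u v -> exists idx, NoDup idx /\ trail E u v idx.
Proof.
  induction 1 as [u|u v w Huv W [idx [ND T]]].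
  - exists []; split; [constructor|reflexivity].
  - assert (exists n, nth_error E n = Some (u, v) \/ nth_error E n = Some (v, u)) as [n Hn].
    { destruct Huv as [H|H]; apply In_nth_error in H as [n Hn]; exists n; auto. }
    destruct (in_dec Nat.eq_dec n idx) as [Hin|Hnin].
    + apply in_split in Hin as [i1 [i2 ->]].
      apply trail_split in T as [y [_ [z [Hz T2]]]].
      pose proof (NoDup_remove_2 _ _ _ ND) as Hn2.
      apply NoDup_remove_1, NoDup_app_remove_l in ND.
      assert ((y = u /\ z = v) \/ (y = v /\ z = u)) as [[-> ->]|[-> ->]]
        by (destruct Hn as [Hn|Hn], Hz as [Hz|Hz]; rewrite Hn in Hz;
            injection Hz; intros; subst; auto).
      * exists (n :: i2). split; [constructor; auto; intro; apply Hn2, in_or_app; auto|].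
        exists v; auto.
      * exists i2; auto.
    + exists (n :: idx). split; [constructor; auto|]. exists v; auto.
Qed.

Lemma trail_reindex E E' (f : nat -> nat) u v idx :
  (forall n, In n idx -> nth_error E' n = nth_error E (f n)) ->
  trail E' u v idx -> trail E u v (map f idx).
Proof.
  revert u; induction idx as [|n idx IH]; simpl; auto.
  intros u Hf [y [Hy Ht]]. exists y. rewrite <- Hf by auto. split; auto.
Qed.

Lemma acyclic_reindex E E' (f : nat -> nat) :
  Injective f -> (forall n, nth_error E' n = nth_error E (f n)) ->
  acyclic E -> acyclic E'.
Proof.
  intros Hinj Hf A [u [idx [Hne [ND T]]]]. apply A. exists u, (map f idx).
  split; [destruct idx; simpl; congruence|].
  split; [apply Injective_map_NoDup; auto|].
  apply trail_reindex with E'; auto.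
Qed.

Lemma acyclic_perm E E' : Permutation E E' -> acyclic E -> acyclic E'.
Proof.
  intros P. apply Permutation_nth_error in P as [_ [f [Hinj Hf]]].
  apply (acyclic_reindex _ _ f); auto.
Qed.

Lemma acyclic_cons_iff u v E : acyclic ((u, v) :: E) <-> acyclic E /\ ~ walk E u v.
Proof.
  split.
  - intros A. split.
    + apply (acyclic_reindex ((u, v) :: E) _ S); auto. intros m n H; injection H; auto.
    + intros W. apply walk_sym, walk_trail in W as [idx [ND T]].
      apply A. exists u, (0 :: map S idx). split; [discriminate|split].
      * constructor; [rewrite in_map_iff; intros [n [H _]]; discriminate|].
        apply Injective_map_NoDup; auto. intros m n H; injection H; auto.
      * exists v. split; [auto|]. apply trail_reindex with E; auto.
  - intros [A Nw] [x [idx [Hne [ND T]]]].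
    destruct (in_dec Nat.eq_dec 0 idx) as [Hin|Hnin].
    + (* the rest of a cycle through the new edge joins its two ends in [E] *)
      apply in_split in Hin as [i1 [i2 ->]].
      apply trail_split in T as [y [T1 [z [Hz T2]]]].
      pose proof (NoDup_remove_2 _ _ _ ND) as H0.
      apply (trail_reindex E _ pred) in T2 as T3;
        [|intros [|n] Hn; [contradiction H0; apply in_or_app; auto|reflexivity]].
      apply (trail_reindex E _ pred) in T1 as T4;
        [|intros [|n] Hn; [contradiction H0; apply in_or_app; auto|reflexivity]].
      pose proof (walk_trans _ _ _ _ (trail_walk _ _ _ _ T3) (trail_walk _ _ _ _ T4)) as W.
      apply Nw. destruct Hz as [Hz|Hz]; injection Hz; intros; subst; auto using walk_sym.
    + apply A. exists x, (map pred idx). split; [destruct idx; simpl; congruence|split].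
      * apply Injective_map_NoDup_in; auto. intros [|m] [|n] Hm Hn; simpl; try tauto; congruence.
      * apply trail_reindex with ((u, v) :: E); auto. intros [|n] Hn; [contradiction|reflexivity].
Qed.

Lemma trail_unmap f g E u v idx :
  (forall x, g (f x) = x) -> trail (map (pair_map f) E) u v idx -> trail E (g u) (g v) idx.
Proof.
  intros Hg; revert u; induction idx as [|n idx IH]; simpl; intros u T; [subst; auto|].
  destruct T as [w [Hw T]]. exists (g w). split; [|auto].
  rewrite nth_error_map in Hw.
  destruct (nth_error E n) as [[y z]|]; simpl in Hw; [|destruct Hw; discriminate].
  destruct Hw as [Hw|Hw]; injection Hw; intros; subst; rewrite !Hg; auto.
Qed.

Lemma acyclic_map f g E :
  (forall x, g (f x) = x) -> acyclic E -> acyclic (map (pair_map f) E).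
Proof.
  intros Hg A [u [idx [Hne [ND T]]]]. apply A.
  exists (g u), idx. split; [|split]; eauto using trail_unmap.
Qed.

(** * Switchings *)

Lemma sw_edges_app s E1 E2 : sw_edges s (E1 ++ E2) = sw_edges s E1 ++ sw_edges s E2.
Proof. unfold sw_edges. rewrite filter_app, map_app; auto. Qed.

Lemma Permutation_sw_edges s E E' :
  Permutation E E' -> Permutation (sw_edges s E) (sw_edges s E').
Proof.
  unfold sw_edges. intros P. apply Permutation_map.
  induction P; simpl; auto.
  - destruct (kept s x); auto.
  - destruct (kept s x), (kept s y); auto. constructor.
  - eapply perm_trans; eauto.
Qed.

Lemma in_sw_edges s E u v :
  In (u, v) (sw_edges s E) <-> exists l, In (u, v, l) E /\ kept s (u, v, l) = true.
Proof.
  unfold sw_edges. rewrite in_map_iff. split.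
  - intros [[[c q] l] [H1 H2]]. injection H1; intros; subst.
    apply filter_In in H2. exists l; tauto.
  - intros [l [H1 H2]]. exists (u, v, l). split; auto. apply filter_In; auto.
Qed.

Lemma in_sw_edges_tensor s E c q : In (c, q, None) E -> In (c, q) (sw_edges s E).
Proof. intros H; apply in_sw_edges; exists None; auto. Qed.

Lemma sw_edges_incl s E E' : incl E E' -> incl (sw_edges s E) (sw_edges s E').
Proof. intros I [u v] H. apply in_sw_edges in H as [l [H1 H2]]. apply in_sw_edges; eauto. Qed.

Lemma kept_ext s s' c q l : s' q = s q -> kept s' (c, q, l) = kept s (c, q, l).
Proof. intros Hq; destruct l; simpl; auto; rewrite Hq; auto. Qed.

Lemma sw_edges_ext s s' E :
  (forall c q l, In (c, q, l) E -> s' q = s q) -> sw_edges s' E = sw_edges s E.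
Proof.
  unfold sw_edges. intros H. f_equal.
  induction E as [|[[c q] l] E IH]; cbn -[kept]; auto.
  rewrite kept_ext with (s := s), IH by (intros; eapply H; simpl; eauto); auto.
Qed.

Definition switch_at (s : switching) (a : node) (b : bool) : switching :=
  fun v => if node_eq_dec v a then b else s v.

Lemma switch_at_eq s a b : switch_at s a b a = b.
Proof. unfold switch_at; destruct node_eq_dec; congruence. Qed.

Lemma switch_at_neq s a b v : v <> a -> switch_at s a b v = s v.
Proof. unfold switch_at; destruct node_eq_dec; congruence. Qed.

Definition relabel_edge (f : node -> node) (flip : node -> bool) (e : ledge) : ledge :=
  let '(c, p, l) := e in (f c, f p, if flip p then option_map negb l else l).

Lemma sw_edges_relabel s f flip E :
  sw_edges s (map (relabel_edge f flip) E)
  = map (pair_map f) (sw_edges (fun v => xorb (flip v) (s (f v))) E).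
Proof.
  unfold sw_edges. induction E as [|[[c p] l] E IH]; cbn -[kept]; auto.
  replace (kept s _) with (kept (fun v => xorb (flip v) (s (f v))) (c, p, l))
    by (destruct l as [[|]|]; simpl; destruct (flip p), (s (f p)); reflexivity).
  destruct kept; simpl; rewrite IH; reflexivity.
Qed.

Definition sw_tree (V : list node) (E : list ledge) : Prop :=
  forall s, connected V (sw_edges s E) /\ acyclic (sw_edges s E).

Lemma sw_tree_relabel V1 E1 V2 E2 f g flip :
  (forall v, g (f v) = v) ->
  Permutation E2 (map (relabel_edge f flip) E1) -> incl V2 (map f V1) ->
  sw_tree V1 E1 -> sw_tree V2 E2.
Proof.
  intros Hg PE IV T s. set (s1 := fun v => xorb (flip v) (s (f v))).
  destruct (T s1) as [C A].
  assert (P2 : Permutation (map (pair_map f) (sw_edges s1 E1)) (sw_edges s E2)).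
  { unfold s1; rewrite <- sw_edges_relabel. apply Permutation_sym, Permutation_sw_edges; auto. }
  split.
  - intros u v Hu Hv. apply IV, in_map_iff in Hu as [u0 [<- Hu]].
    apply IV, in_map_iff in Hv as [v0 [<- Hv]].
    apply walk_incl with (map (pair_map f) (sw_edges s1 E1)).
    + intros e He; eapply Permutation_in; eauto.
    + apply walk_map, C; auto.
  - eapply acyclic_perm; [exact P2|]. eapply acyclic_map; eauto.
Qed.

Lemma sw_tree_perm V1 E1 V2 E2 :
  Permutation E1 E2 -> incl V2 V1 -> sw_tree V1 E1 -> sw_tree V2 E2.
Proof.
  intros PE IV T s. destruct (T s) as [C A].
  pose proof (Permutation_sw_edges s _ _ PE) as Ps. split.
  - intros u v Hu Hv. eapply walk_incl; [|apply C; auto].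
    intros e He; eapply Permutation_in; eauto.
  - eapply acyclic_perm; eauto.
Qed.

(** * Linking contexts and addresses *)

Definition ctx_root (C : ctx) (p : list bool) (r : node) : node :=
  match C with Hole => r | _ => NLk p end.

(* The edges and nodes of [plug C X] outside [X]; [r] stands for the root of [X]. *)
Fixpoint ctx_edges (C : ctx) (p : list bool) (r : node) : list ledge :=
  match C with
  | Hole => []
  | CTensL C' B =>
      (ctx_root C' (false :: p) r, NLk p, None) :: (lk_root (true :: p) B, NLk p, None)
        :: ctx_edges C' (false :: p) r ++ lk_edges (true :: p) B
  | CTensR A C' =>
      (lk_root (false :: p) A, NLk p, None) :: (ctx_root C' (true :: p) r, NLk p, None)
        :: lk_edges (false :: p) A ++ ctx_edges C' (true :: p) r
  | CParL C' B =>
      (ctx_root C' (false :: p) r, NLk p, Some false) :: (lk_root (true :: p) B, NLk p, Some true)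
        :: ctx_edges C' (false :: p) r ++ lk_edges (true :: p) B
  | CParR A C' =>
      (lk_root (false :: p) A, NLk p, Some false) :: (ctx_root C' (true :: p) r, NLk p, Some true)
        :: lk_edges (false :: p) A ++ ctx_edges C' (true :: p) r
  end.

Fixpoint ctx_nodes (C : ctx) (p : list bool) : list node :=
  match C with
  | Hole => []
  | CTensL C' B | CParL C' B => NLk p :: ctx_nodes C' (false :: p) ++ lk_nodes (true :: p) B
  | CTensR A C' | CParR A C' => NLk p :: lk_nodes (false :: p) A ++ ctx_nodes C' (true :: p)
  end.

Lemma lk_root_plug C p X : lk_root p (plug C X) = ctx_root C p (lk_root (hpath C p) X).
Proof. destruct C; reflexivity. Qed.

Lemma Permutation_lk_edges_plug C p X :
  Permutation (lk_edges p (plug C X))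
    (ctx_edges C p (lk_root (hpath C p) X) ++ lk_edges (hpath C p) X).
Proof.
  revert p; induction C; intros p; simpl; rewrite ?lk_root_plug; auto;
    do 2 constructor; rewrite IHC, <- !app_assoc;
    first [apply Permutation_app_head, Permutation_app_comm | reflexivity].
Qed.

Lemma Permutation_lk_nodes_plug C p X :
  Permutation (lk_nodes p (plug C X)) (ctx_nodes C p ++ lk_nodes (hpath C p) X).
Proof.
  revert p; induction C; intros p; simpl; auto;
    constructor; rewrite IHC, <- !app_assoc;
    first [apply Permutation_app_head, Permutation_app_comm | reflexivity].
Qed.

Lemma Permutation_lk_leaves_plug C X Y :
  Permutation (lk_leaves X) (lk_leaves Y) ->
  Permutation (lk_leaves (plug C X)) (lk_leaves (plug C Y)).
Proof.
  intros H; induction C; simpl; auto;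
    first [apply Permutation_app_tail | apply Permutation_app_head]; auto.
Qed.

Lemma NoDup_lk_leaves_plug C X : NoDup (lk_leaves (plug C X)) -> NoDup (lk_leaves X).
Proof.
  induction C; simpl; auto; intros H; apply IHC;
    first [exact (NoDup_app_remove_r _ _ H) | exact (NoDup_app_remove_l _ _ H)].
Qed.

Lemma in_lk_leaves_plug C X l : In l (lk_leaves X) -> In l (lk_leaves (plug C X)).
Proof. induction C; simpl; auto; intros; apply in_or_app; auto. Qed.

Definition is_leaf (X : lk) : bool := match X with LLeaf _ => true | _ => false end.

Lemma is_leaf_plug C X : is_leaf X = false -> is_leaf (plug C X) = false.
Proof. destruct C; simpl; auto. Qed.

(* [X] must not be a leaf: a leaf may be half of an axiom link [a ⊗ a^⊥]. *)
Lemma is_linking_plug C X Y :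
  is_leaf X = false -> (is_linking X -> is_linking Y) ->
  is_linking (plug C X) -> is_linking (plug C Y).
Proof.
  intros HX HXY; induction C; simpl; auto; intros H; inversion H; subst;
    try match goal with E : LLeaf _ = plug _ _ |- _ =>
          symmetry in E; apply (f_equal is_leaf) in E; rewrite is_leaf_plug in E; auto; discriminate
        end;
    constructor; auto.
Qed.

(* Addresses grow at the front, so [NLk (d ++ h)] ranges over the linking nodes
   at or below [h]. *)
Definition outside (h : list bool) (v : node) : Prop := forall d, v <> NLk (d ++ h).

Definition not_lk (v : node) : Prop := forall z, v <> NLk z.

Lemma outside_not_lk h v : not_lk v -> outside h v.
Proof. intros H d; apply H. Qed.

Lemma outside_short h q : length q < length h -> outside h (NLk q).
Proof. intros Hl d E; injection E; intros; subst; rewrite length_app in Hl; lia. Qed.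

Lemma outside_root h : ~ outside h (NLk h).
Proof. intros O; apply (O []); reflexivity. Qed.

Lemma snoc_app (d : list bool) b p : d ++ b :: p = (d ++ [b]) ++ p.
Proof. rewrite <- app_assoc; reflexivity. Qed.

Lemma lk_root_in p T : In (lk_root p T) (lk_nodes p T).
Proof. destruct T; simpl; auto. Qed.

Lemma lk_nodes_shape p T v :
  In v (lk_nodes p T) ->
  (exists l, v = NLeaf l /\ In l (lk_leaves T)) \/ exists d, v = NLk (d ++ p).
Proof.
  revert p; induction T as [l|A IHA B IHB|A IHA B IHB]; simpl; intros p H;
    [destruct H as [<-|[]]; left; eauto
    |(destruct H as [<-|H]; [right; exists []; auto|];
      apply in_app_or in H as [H|H];
      (first [apply IHA in H|apply IHB in H]; destruct H as [[l [-> Hl]]|[d ->]];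
       [left; exists l; split; auto; apply in_or_app; auto
       |right; rewrite snoc_app; eexists; reflexivity])) ..].
Qed.

Lemma lk_nodes_neq_short p T v h : In v (lk_nodes p T) -> length h < length p -> v <> NLk h.
Proof.
  intros H Hl ->. apply lk_nodes_shape in H as [[l [E _]]|[d E]]; [discriminate|].
  injection E as ->. rewrite length_app in Hl; lia.
Qed.

Lemma lk_below_neq d b p : NLk (d ++ b :: p) <> NLk p.
Proof.
  intros E. injection E as E. apply (f_equal (@length bool)) in E.
  rewrite length_app in E; simpl in E; lia.
Qed.

Lemma leaf_in_lk_nodes p T l : In l (lk_leaves T) -> In (NLeaf l) (lk_nodes p T).
Proof.
  revert p; induction T; simpl; intros p H; [destruct H as [<-|[]]; auto| |];
    right; apply in_app_or in H as [H|H]; apply in_or_app; auto.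
Qed.

Lemma lk_edges_shape p T c q l :
  In (c, q, l) (lk_edges p T) ->
  In c (lk_nodes p T) /\ In q (lk_nodes p T) /\ exists d, q = NLk (d ++ p).
Proof.
  revert p; induction T as [|A IHA B IHB|A IHA B IHB]; intros p H; [contradiction| |];
    cbn [lk_edges lk_nodes] in H |- *;
    (destruct H as [H|[H|H]];
     [injection H as <- <- _; split; [right; apply in_or_app; left; apply lk_root_in|]
     |injection H as <- <- _; split; [right; apply in_or_app; right; apply lk_root_in|]
     |apply in_app_or in H as [H|H];
      (first [apply IHA in H|apply IHB in H]; destruct H as [H1 [H2 [d ->]]];
       split; [right; apply in_or_app; auto|split; [right; apply in_or_app; auto|]];
       rewrite snoc_app; eexists; reflexivity)]).
  all: split; [left; reflexivity|exists []; reflexivity].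
Qed.

Lemma branch_eq (e d : list bool) b b' p : e ++ b :: p = d ++ b' :: p -> b = b'.
Proof.
  intros E. rewrite (snoc_app e), (snoc_app d) in E.
  apply app_inv_tail in E. apply app_inj_tail in E. tauto.
Qed.

Lemma outside_sibling p b b' T d v :
  b <> b' -> In v (lk_nodes (b :: p) T) -> outside (d ++ b' :: p) v.
Proof.
  intros Hb H. apply lk_nodes_shape in H as [[l [-> _]]|[e ->]]; intros d' E; [discriminate|].
  injection E; rewrite app_assoc; intros E'. apply branch_eq in E'; auto.
Qed.

Lemma hpath_app C p : hpath C p = hpath C [] ++ p.
Proof.
  revert p; induction C; intros p; simpl; auto;
    rewrite IHC, (IHC [_]), <- app_assoc; reflexivity.
Qed.

Lemma ctx_nodes_outside C p v : In v (ctx_nodes C p) -> outside (hpath C p) v.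
Proof.
  revert p; induction C; intros p H; [contradiction|..]; simpl in H |- *;
    (destruct H as [<-|H];
     [apply outside_short; rewrite hpath_app, length_app; simpl; lia
     |apply in_app_or in H as [H|H];
      first [apply IHC; exact H
            |rewrite hpath_app; eapply outside_sibling; [|exact H]; discriminate]]).
Qed.

Lemma ctx_root_in C p r : ctx_root C p r = r \/ In (ctx_root C p r) (ctx_nodes C p).
Proof. destruct C; simpl; auto. Qed.

Lemma ctx_edges_ends C p r c q l :
  In (c, q, l) (ctx_edges C p r) ->
  (c = r \/ In c (ctx_nodes C p)) /\ In q (ctx_nodes C p) /\ exists z, q = NLk z.
Proof.
  revert p; induction C; intros p H; [contradiction|..]; simpl in H |- *;
    (destruct H as [H|[H|H]];
     [|
     |apply in_app_or in H as [H|H];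
      first [apply IHC in H as [[->|Hc] [Hq Hz]]
            |apply lk_edges_shape in H as [Hc [Hq [d ->]]]];
      rewrite ?in_app_iff; intuition eauto]).
  all: injection H as <- <- _; split; [|split; [left|]; eauto].
  all: first [right; right; apply in_or_app; (left + right); apply lk_root_in
             |match goal with |- ctx_root ?C' ?p' ?r' = ?r' \/ _ =>
                destruct (ctx_root_in C' p' r') as [->|Hc]; [left|right; right]; auto;
                apply in_or_app; auto end].
Qed.

Lemma fm_root_not_lk n p A : not_lk (fm_root n p A).
Proof. destruct A; discriminate. Qed.

Lemma fm_nodes_not_lk n p A v : In v (fm_nodes n p A) -> not_lk v.
Proof.
  revert p; induction A; simpl; intros p H;
    [destruct H as [<-|[]]; discriminate
    |(destruct H as [<-|H]; [discriminate|apply in_app_or in H as [H|H]; eauto]) ..].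
Qed.

Lemma fm_edges_ends n p A c q l :
  In (c, q, l) (fm_edges n p A) -> not_lk c /\ exists z, q = NSq n z.
Proof.
  revert p; induction A; simpl; intros p H;
    [contradiction
    |(destruct H as [H|[H|H]];
      [injection H as <- <- _; split; [apply fm_root_not_lk|eauto] ..
      |apply in_app_or in H as [H|H]; eauto]) ..].
Qed.

Lemma seq_nodes_not_lk G n v : In v (seq_nodes n G) -> not_lk v.
Proof.
  revert n; induction G as [|[A|A B] G IH]; simpl; intros n H; [contradiction| |].
  - apply in_app_or in H as [H|H]; eauto using fm_nodes_not_lk.
  - destruct H as [<-|H]; [discriminate|].
    rewrite !in_app_iff in H; destruct H as [[H|H]|H]; eauto using fm_nodes_not_lk.
Qed.

Lemma seq_edges_ends G n c q l :
  In (c, q, l) (seq_edges n G) -> not_lk c /\ exists m z, q = NSq m z.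
Proof.
  revert n; induction G as [|[A|A B] G IH]; simpl; intros n H; [contradiction| |].
  - apply in_app_or in H as [H|H]; eauto.
    apply fm_edges_ends in H as [? [z ->]]; eauto.
  - rewrite !in_app_iff in H. destruct H as [H|[H|[[H|H]|H]]]; [idtac ..|eauto].
    1,2: injection H as <- <- _; split; [apply fm_root_not_lk|eauto].
    all: apply fm_edges_ends in H as [? [z ->]]; eauto.
Qed.

(* Everything of the proof graph [<plug C X | G>] except the subtree [X]. *)
Definition frame_edges (C : ctx) (G : sequent) : list ledge :=
  ctx_edges C [] (NLk (hpath C [])) ++ seq_edges 0 G.

Definition frame_nodes (C : ctx) (G : sequent) : list node :=
  ctx_nodes C [] ++ seq_nodes 0 G.

Lemma pg_edges_plug C G X :
  is_leaf X = false ->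
  Permutation (pg_edges (plug C X) G) (frame_edges C G ++ lk_edges (hpath C []) X).
Proof.
  intros HX. unfold pg_edges, frame_edges. rewrite Permutation_lk_edges_plug.
  replace (lk_root (hpath C []) X) with (NLk (hpath C [])) by (destruct X; simpl in *; congruence).
  rewrite <- !app_assoc. apply Permutation_app_head, Permutation_app_comm.
Qed.

Lemma pg_nodes_plug C G X :
  Permutation (pg_nodes (plug C X) G) (frame_nodes C G ++ lk_nodes (hpath C []) X).
Proof.
  unfold pg_nodes, frame_nodes. rewrite Permutation_lk_nodes_plug, <- !app_assoc.
  apply Permutation_app_head, Permutation_app_comm.
Qed.

Lemma frame_edges_outside C G c q l :
  In (c, q, l) (frame_edges C G) ->
  (c = NLk (hpath C []) \/ outside (hpath C []) c) /\ outside (hpath C []) q /\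
  forall l', q <> NLeaf l'.
Proof.
  intros H. apply in_app_or in H as [H|H].
  - apply ctx_edges_ends in H as [[Hc|Hc] [Hq [z ->]]];
      repeat split; auto using ctx_nodes_outside; discriminate.
  - apply seq_edges_ends in H as [Hc [m [z ->]]].
    repeat split; auto using outside_not_lk; discriminate.
Qed.

Lemma frame_nodes_outside C G v : In v (frame_nodes C G) -> outside (hpath C []) v.
Proof.
  intros H. apply in_app_or in H as [H|H];
    eauto using ctx_nodes_outside, outside_not_lk, seq_nodes_not_lk.
Qed.

(** * Relabelling and commutations *)

Definition strip_suffix (h q : list bool) : option (list bool) :=
  if Nat.leb (length h) (length q) then
    if list_eq_dec bool_dec (skipn (length q - length h) q) h
    then Some (firstn (length q - length h) q) else None
  else None.

Lemma strip_suffix_app h d : strip_suffix h (d ++ h) = Some d.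
Proof.
  unfold strip_suffix. rewrite length_app.
  replace (length d + length h - length h) with (length d) by lia.
  destruct (Nat.leb_spec (length h) (length d + length h)); [|lia].
  rewrite skipn_app, firstn_app, Nat.sub_diag, skipn_all, firstn_all. simpl.
  destruct (list_eq_dec bool_dec h h) as [_|n]; [|congruence]. rewrite app_nil_r; auto.
Qed.

Lemma strip_suffix_Some h q d : strip_suffix h q = Some d -> q = d ++ h.
Proof.
  unfold strip_suffix. destruct (Nat.leb _ _); [|discriminate].
  destruct (list_eq_dec _ _ _) as [E|]; [|discriminate]. intros H; injection H as <-.
  rewrite <- E at 2. symmetry; apply firstn_skipn.
Qed.

(* Rearranges the linking nodes below the address [h]: the node reached from
   [h] along the path [g] (read from the top) moves to the path [sg g]. *)
Definition relabel_below (sg : list bool -> list bool) (h : list bool) (v : node) : node :=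
  match v with
  | NLk q => match strip_suffix h q with Some d => NLk (rev (sg (rev d)) ++ h) | None => v end
  | _ => v
  end.

Lemma relabel_below_outside sg h v : outside h v -> relabel_below sg h v = v.
Proof.
  destruct v; simpl; auto. intros O. destruct (strip_suffix h p) eqn:E; auto.
  apply strip_suffix_Some in E; subst. exfalso; eapply O; eauto.
Qed.

Lemma relabel_below_app sg h d :
  relabel_below sg h (NLk (d ++ h)) = NLk (rev (sg (rev d)) ++ h).
Proof. simpl. rewrite strip_suffix_app; auto. Qed.

Lemma relabel_below_cons sg h b : relabel_below sg h (NLk (b :: h)) = NLk (rev (sg [b]) ++ h).
Proof. exact (relabel_below_app sg h [b]). Qed.

Lemma relabel_below_root sg h : sg [] = [] -> relabel_below sg h (NLk h) = NLk h.
Proof.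
  intros H. change (NLk h) with (NLk ([] ++ h)) at 1.
  rewrite relabel_below_app; simpl; rewrite H; reflexivity.
Qed.

Lemma relabel_below_inv sg tg h v :
  (forall g, tg (sg g) = g) -> relabel_below tg h (relabel_below sg h v) = v.
Proof.
  intros Hi. destruct v; simpl; auto. destruct (strip_suffix h p) eqn:E.
  - apply strip_suffix_Some in E; subst.
    rewrite relabel_below_app, rev_involutive, Hi, rev_involutive; auto.
  - simpl. rewrite E; auto.
Qed.

Lemma lk_relocate f flip T p p' :
  (forall l, f (NLeaf l) = NLeaf l) ->
  (forall d, f (NLk (d ++ p)) = NLk (d ++ p')) ->
  (forall d, flip (NLk (d ++ p)) = false) ->
  map (relabel_edge f flip) (lk_edges p T) = lk_edges p' T /\
  map f (lk_nodes p T) = lk_nodes p' T /\ f (lk_root p T) = lk_root p' T.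
Proof.
  revert p p'; induction T as [l|A IHA B IHB|A IHA B IHB]; intros p p' Hl Hd Hf;
    [simpl; rewrite Hl; auto|..];
    (assert (Hd' : forall b d, f (NLk (d ++ b :: p)) = NLk (d ++ b :: p'))
       by (intros b d; rewrite (snoc_app d b p), (snoc_app d b p'); apply Hd);
     assert (Hf' : forall b d, flip (NLk (d ++ b :: p)) = false)
       by (intros b d; rewrite (snoc_app d b p); apply Hf);
     destruct (IHA (false :: p) (false :: p') Hl (Hd' _) (Hf' _)) as [EA [NA RA]];
     destruct (IHB (true :: p) (true :: p') Hl (Hd' _) (Hf' _)) as [EB [NB RB]];
     simpl; rewrite (Hd [] : f (NLk p) = NLk p'), (Hf [] : flip (NLk p) = false);
     rewrite !map_app, EA, EB, NA, NB, RA, RB; auto).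
Qed.

Lemma relabel_below_subtree sg h flip T e e' :
  (forall g, sg (rev e ++ g) = rev e' ++ g) ->
  (forall d, flip (NLk (d ++ e ++ h)) = false) ->
  map (relabel_edge (relabel_below sg h) flip) (lk_edges (e ++ h) T) = lk_edges (e' ++ h) T /\
  map (relabel_below sg h) (lk_nodes (e ++ h) T) = lk_nodes (e' ++ h) T /\
  relabel_below sg h (lk_root (e ++ h) T) = lk_root (e' ++ h) T.
Proof.
  intros Hsg Hf. apply lk_relocate; auto. intros d.
  rewrite app_assoc, relabel_below_app, rev_app_distr, Hsg, rev_app_distr, !rev_involutive.
  rewrite app_assoc.
  reflexivity.
Qed.

Lemma frame_edges_relabel sg flip C G :
  sg [] = [] -> (forall v, outside (hpath C []) v -> flip v = false) ->
  map (relabel_edge (relabel_below sg (hpath C [])) flip) (frame_edges C G) = frame_edges C G.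
Proof.
  intros Hsg Hf. rewrite <- map_id. apply map_ext_in. intros [[c q] l] H.
  apply frame_edges_outside in H as [[->|Hc] [Hq _]]; cbn -[relabel_below];
    rewrite Hf, (relabel_below_outside _ _ q) by auto;
    rewrite ?relabel_below_root, ?relabel_below_outside; auto.
Qed.

Lemma frame_nodes_relabel sg C G :
  map (relabel_below sg (hpath C [])) (frame_nodes C G) = frame_nodes C G.
Proof.
  rewrite <- map_id. apply map_ext_in. intros v H.
  apply relabel_below_outside, frame_nodes_outside with G; auto.
Qed.

Definition lk_bin (par : bool) (A B : lk) : lk := if par then LPar A B else LTens A B.

Definition flip_head (g : list bool) : list bool :=
  match g with [] => [] | b :: g' => negb b :: g' end.

Definition flip_at (h : list bool) (v : node) : bool :=
  if node_eq_dec v (NLk h) then true else false.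

Lemma flip_at_below h e d : e <> [] -> flip_at h (NLk (d ++ e ++ h)) = false.
Proof.
  intros He. unfold flip_at. destruct node_eq_dec as [E|]; auto.
  injection E as E. apply (f_equal (@length bool)) in E.
  rewrite !length_app in E. destruct e; [congruence|simpl in E; lia].
Qed.

(* Letting the two subtrees trade addresses is an isomorphism of switching
   graphs, once the switch of the node at the hole is flipped. *)
Lemma sw_tree_swap C G par A B :
  sw_tree (pg_nodes (plug C (lk_bin par A B)) G) (pg_edges (plug C (lk_bin par A B)) G) ->
  sw_tree (pg_nodes (plug C (lk_bin par B A)) G) (pg_edges (plug C (lk_bin par B A)) G).
Proof.
  assert (Hbin : forall X Y, is_leaf (lk_bin par X Y) = false) by (destruct par; reflexivity).
  remember (hpath C []) as h eqn:Hh.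
  destruct (relabel_below_subtree flip_head h (flip_at h) A [false] [true]) as [EA [NA RA]];
    [reflexivity|intros; apply flip_at_below; discriminate|].
  destruct (relabel_below_subtree flip_head h (flip_at h) B [true] [false]) as [EB [NB RB]];
    [reflexivity|intros; apply flip_at_below; discriminate|].
  cbn [app] in EA, NA, RA, EB, NB, RB.
  assert (Hroot : relabel_below flip_head h (NLk h) = NLk h)
    by (apply relabel_below_root; reflexivity).
  assert (Hflip : flip_at h (NLk h) = true) by (unfold flip_at; destruct node_eq_dec; congruence).
  apply sw_tree_relabel with (relabel_below flip_head h) (relabel_below flip_head h) (flip_at h).
  - intros v; apply relabel_below_inv. intros [|b g]; simpl; rewrite ?negb_involutive; auto.
  - rewrite pg_edges_plug by apply Hbin.
    eapply Permutation_trans; [|apply Permutation_map, Permutation_sym, pg_edges_plug, Hbin].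
    subst h. rewrite map_app, frame_edges_relabel;
      [|reflexivity|intros v Hv; unfold flip_at; destruct node_eq_dec;
                    [subst; contradiction (outside_root _ Hv)|reflexivity]].
    apply Permutation_app_head.
    destruct par; cbn -[relabel_below flip_at];
      rewrite Hflip, Hroot, RA, RB, map_app, EA, EB; simpl;
      (eapply perm_trans; [apply perm_swap|]); do 2 constructor; apply Permutation_app_comm.
  - intros v Hv. apply (Permutation_in _ (pg_nodes_plug _ _ _)) in Hv.
    apply (Permutation_in _ (Permutation_map _ (Permutation_sym (pg_nodes_plug _ _ _)))).
    subst h. rewrite map_app, frame_nodes_relabel.
    apply in_app_or in Hv as [Hv|Hv]; apply in_or_app; [left; auto|right].
    destruct par; cbn -[relabel_below] in *; rewrite Hroot, map_app, NA, NB;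
      destruct Hv as [Hv|Hv]; auto; right; apply in_app_or in Hv; apply in_or_app; tauto.
Qed.

Fixpoint ctx_comp (C D : ctx) : ctx :=
  match C with
  | Hole => D
  | CTensL C' B => CTensL (ctx_comp C' D) B
  | CTensR A C' => CTensR A (ctx_comp C' D)
  | CParL C' B => CParL (ctx_comp C' D) B
  | CParR A C' => CParR A (ctx_comp C' D)
  end.

Lemma plug_ctx_comp C D X : plug (ctx_comp C D) X = plug C (plug D X).
Proof. induction C; simpl; f_equal; auto. Qed.

Lemma proof_graph_swap C G par A B :
  proof_graph (plug C (lk_bin par A B)) G -> proof_graph (plug C (lk_bin par B A)) G.
Proof.
  intros [L [W [N [P T]]]].
  assert (PL : Permutation (lk_leaves (plug C (lk_bin par A B)))
                           (lk_leaves (plug C (lk_bin par B A))))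
    by (apply Permutation_lk_leaves_plug; destruct par; apply Permutation_app_comm).
  split; [|split; [auto|split; [|split]]].
  - apply (is_linking_plug C (lk_bin par A B)); [destruct par; reflexivity| |exact L].
    destruct par; simpl; intros H; inversion H; subst; constructor; auto.
  - eapply Permutation_NoDup; eauto.
  - eapply Permutation_trans; [apply Permutation_sym|]; eauto.
  - exact (sw_tree_swap C G par A B T).
Qed.

Lemma pg_step_swap C D G par A B :
  proof_graph (plug C (plug D (lk_bin par A B))) G ->
  pg_step (plug C (plug D (lk_bin par A B)), G) (plug C (plug D (lk_bin par B A)), G).
Proof.
  rewrite <- !plug_ctx_comp. intros H.
  split; [reflexivity|split; [exact H|split; [apply proof_graph_swap, H|]]].
  destruct par; constructor.
Qed.

Lemma pg_step_target X Y : pg_step X Y -> proof_graph (fst Y) (snd Y).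
Proof. intros [_ [_ [H _]]]; exact H. Qed.

(** * Climbing to the root of a subtree *)

Lemma walk_up_child p b X E lab s w :
  In (lk_root (b :: p) X, NLk p, lab) E -> incl (lk_edges (b :: p) X) E ->
  (lab = None \/ lab = Some b) ->
  walk (sw_edges s (lk_edges (b :: p) X)) w (lk_root (b :: p) X) ->
  walk (sw_edges (switch_at s (NLk p) b) E) w (NLk p).
Proof.
  intros Hr HX Hlab W. apply walk_trans with (lk_root (b :: p) X).
  - rewrite <- (sw_edges_ext s (switch_at s (NLk p) b)) in W.
    + eapply walk_incl; [apply sw_edges_incl, HX|exact W].
    + intros c q l H. apply lk_edges_shape in H as [_ [_ [d ->]]].
      apply switch_at_neq, lk_below_neq.
  - apply walk_edge, in_sw_edges. exists lab. split; [exact Hr|].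
    destruct Hlab as [->| ->]; simpl; rewrite ?switch_at_eq; auto using eqb_reflx.
Qed.

(* Switch every par on the way up towards the branch containing [w]. *)
Lemma walk_to_lk_root p T s w :
  In w (lk_nodes p T) ->
  exists s', (forall v, ~ In v (lk_nodes p T) -> s' v = s v) /\
             walk (sw_edges s' (lk_edges p T)) w (lk_root p T).
Proof.
  revert p w; induction T as [l|A IHA B IHB|A IHA B IHB]; intros p w H;
    [destruct H as [<-|[]]; exists s; split; [auto|constructor]|..];
    (destruct H as [<-|H]; [exists s; split; [auto|constructor]|];
     apply in_app_or in H as [H|H];
     [destruct (IHA (false :: p) w H) as [s' [Ag W]]; exists (switch_at s' (NLk p) false)
     |destruct (IHB (true :: p) w H) as [s' [Ag W]]; exists (switch_at s' (NLk p) true)];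
     (split;
      [intros v Hv; rewrite (switch_at_neq s' (NLk p) _ v);
       [apply Ag; contradict Hv|intros ->; contradict Hv]; simpl; rewrite in_app_iff; intuition
      |eapply walk_up_child; [simpl; auto
                             |intros e He; simpl; right; right; apply in_or_app; auto
                             |tauto
                             |exact W]])).
Qed.

(* Up to its first entry into [S], which is closed under children, the walk
   only uses edges whose parent lies outside [S]; these do not depend on the
   switches inside [S]. *)
Lemma walk_enter E (S : node -> Prop) s x y :
  (forall c q l, In (c, q, l) E -> S q -> S c) ->
  walk (sw_edges s E) x y -> ~ S x -> S y ->
  exists w, S w /\ forall s', (forall v, ~ S v -> s' v = s v) -> walk (sw_edges s' E) x w.
Proof.
  intros HS W. induction W as [u|u v w0 Huv W IH]; intros Hx Hy; [contradiction|].
  assert (Ed : forall s', (forall v, ~ S v -> s' v = s v) ->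
                 In (u, v) (sw_edges s' E) \/ In (v, u) (sw_edges s' E)).
  { intros s' Ag. destruct Huv as [Hi|Hi]; apply in_sw_edges in Hi as [l [Hi Hk]];
      [left|right]; apply in_sw_edges; exists l; split; auto;
      rewrite kept_ext with (s := s); auto; apply Ag; intro; apply Hx; eapply HS; eauto. }
  destruct (classic (S v)) as [Sv|Sv].
  - exists v; split; auto. intros s' Ag. apply walk_step with v; [apply Ed; auto|constructor].
  - destruct (IH Sv Hy) as [w [Sw Hw]]. exists w; split; auto.
    intros s' Ag. apply walk_step with v; auto.
Qed.

Lemma walk_into_subtree E p T s x y :
  (forall c q l, In (c, q, l) E -> In q (lk_nodes p T) -> In c (lk_nodes p T)) ->
  incl (lk_edges p T) E ->
  walk (sw_edges s E) x y -> ~ In x (lk_nodes p T) -> In y (lk_nodes p T) ->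
  exists s', walk (sw_edges s' E) x (lk_root p T).
Proof.
  intros HS HT W Hx Hy.
  destruct (walk_enter E (fun v => In v (lk_nodes p T)) s x y HS W Hx Hy) as [w [Sw Hw]].
  destruct (walk_to_lk_root p T s w Sw) as [s' [Ag Wr]].
  exists s'. apply walk_trans with w; auto.
  eapply walk_incl; [apply sw_edges_incl, HT|exact Wr].
Qed.

(** * Rewiring a par over a tensor *)

Section Rewiring.

(* The par node [a] with children [q] and [b], where [b] is a tensor with
   children [r] and [bot], becomes a tensor [a] with children [b] and [bot],
   where [b] is a par with children [q] and [r]; [M] is the rest of the graph. *)
Variables (M : list ledge) (a b q r bot : node) (V QN : list node).

Definition old_edges : list ledge :=
  [(q, a, Some false); (b, a, Some true); (r, b, None); (bot, b, None)] ++ M.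

Definition new_edges : list ledge :=
  [(b, a, None); (bot, a, None); (q, b, Some false); (r, b, Some true)] ++ M.

Hypothesis M_avoid : forall c p l, In (c, p, l) M -> c <> b /\ p <> b /\ p <> a.
Hypotheses (a_neq_b : a <> b) (q_neq_b : q <> b) (bot_neq_b : bot <> b) (r_neq_b : r <> b).
Hypothesis old_tree : sw_tree V old_edges.
Hypotheses (r_in_V : In r V) (a_in_V : In a V) (q_in_QN : In q QN).
Hypothesis bot_to_QN :
  forall s u, In u QN -> walk (sw_edges s M) bot u -> exists s', walk (sw_edges s' M) bot r.

Lemma sw_edges_switch_a s c : sw_edges (switch_at s a c) M = sw_edges s M.
Proof.
  apply sw_edges_ext. intros c' p l H. apply switch_at_neq, (M_avoid c' p l H).
Qed.

Lemma sw_edges_old s :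
  sw_edges s old_edges = (if s a then (b, a) else (q, a)) :: (r, b) :: (bot, b) :: sw_edges s M.
Proof.
  unfold old_edges; rewrite sw_edges_app; unfold sw_edges at 1; simpl; destruct (s a); auto.
Qed.

Lemma old_left_tree s :
  connected V ((q, a) :: (r, b) :: (bot, b) :: sw_edges s M) /\
  acyclic ((q, a) :: (r, b) :: (bot, b) :: sw_edges s M).
Proof.
  pose proof (old_tree (switch_at s a false)) as T.
  rewrite sw_edges_old, switch_at_eq, sw_edges_switch_a in T. exact T.
Qed.

Lemma old_right_acyclic s : acyclic ((b, a) :: (r, b) :: (bot, b) :: sw_edges s M).
Proof.
  pose proof (proj2 (old_tree (switch_at s a true))) as T.
  rewrite sw_edges_old, switch_at_eq, sw_edges_switch_a in T. exact T.
Qed.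

Lemma acyclic_M s : acyclic (sw_edges s M).
Proof.
  destruct (old_left_tree s) as [_ A].
  do 3 (apply acyclic_cons_iff in A as [A _]). exact A.
Qed.

Lemma walk_M_from_b s x : walk (sw_edges s M) b x -> x = b.
Proof.
  intros W. apply (walk_invariant _ (fun y => y = b)) in W; auto.
  intros u v H. apply in_sw_edges in H as [l [H _]]. apply M_avoid in H. intuition congruence.
Qed.

Lemma no_walk_M_b s x : x <> b -> ~ walk (sw_edges s M) b x.
Proof. intros Hx W. apply Hx, (walk_M_from_b s), W. Qed.

Lemma no_walk_r_bot s : ~ walk (sw_edges s M) r bot.
Proof.
  intros W. destruct (old_left_tree s) as [_ A].
  apply acyclic_cons_iff in A as [A _]. apply acyclic_cons_iff in A as [_ NW].
  apply NW, walk_trans with bot; [|apply walk_edge; simpl; auto].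
  eapply walk_incl; [|exact W]. intros e He; simpl; auto.
Qed.

Lemma no_walk_a_bot s : ~ walk (sw_edges s M) a bot.
Proof.
  intros W. apply (proj2 (proj1 (acyclic_cons_iff _ _ _) (old_right_acyclic s))).
  apply walk_trans with bot; [apply walk_sym, walk_edge; simpl; auto|].
  apply walk_sym. eapply walk_incl; [|exact W]. intros e He; simpl; auto.
Qed.

Lemma no_walk_a_r s : ~ walk (sw_edges s M) a r.
Proof.
  intros W. apply (proj2 (proj1 (acyclic_cons_iff _ _ _) (old_right_acyclic s))).
  apply walk_trans with r; [apply walk_sym, walk_edge; simpl; auto|].
  apply walk_sym. eapply walk_incl; [|exact W]. intros e He; simpl; auto.
Qed.

Lemma no_walk_q_a s : ~ walk (sw_edges s M) q a.
Proof.
  intros W. destruct (old_left_tree s) as [_ A]. apply acyclic_cons_iff in A as [_ NW].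
  apply NW. eapply walk_incl; [|exact W]. intros e He; simpl; auto.
Qed.

Lemma no_walk_QN_bot s u : In u QN -> ~ walk (sw_edges s M) u bot.
Proof.
  intros Hu W. destruct (bot_to_QN s u Hu (walk_sym _ _ _ W)) as [s' W'].
  apply (no_walk_r_bot s'), walk_sym, W'.
Qed.

(* In [old_left_tree s] the only edge at [a] is [(q, a)], so the path from [r]
   to [a] must reach [q] inside [M]. *)
Lemma walk_r_q s : walk (sw_edges s M) r q.
Proof.
  apply NNPP; intros NW. destruct (old_left_tree s) as [C _].
  set (S x := walk (sw_edges s M) x r \/ x = b \/ walk (sw_edges s M) x bot).
  assert (Sa : S a).
  { apply (walk_invariant ((q, a) :: (r, b) :: (bot, b) :: sw_edges s M) S) with r;
      [|apply C; auto|left; constructor].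
    intros u v [H|[H|[H|H]]]; try (injection H as <- <-).
    - unfold S. split; intros [H'|[H'|H']]; exfalso;
        solve [apply NW, walk_sym; auto | auto | apply (no_walk_QN_bot s q); auto
              | apply (no_walk_a_r s); auto | apply (no_walk_a_bot s); auto].
    - unfold S; split; [right; left|left; constructor]; auto.
    - unfold S; split; [right; left|right; right; constructor]; auto.
    - assert (Hu := walk_edge _ _ _ H). assert (Hv := walk_sym _ _ _ Hu).
      unfold S; split; (intros [H'|[->|H']];
        [left; eapply walk_trans; eauto
        |exfalso; apply in_sw_edges in H as [l [H _]]; apply M_avoid in H; tauto
        |right; right; eapply walk_trans; eauto]). }
  destruct Sa as [Sa|[Sa|Sa]]; [eapply no_walk_a_r|contradiction|eapply no_walk_a_bot]; eauto.
Qed.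

Lemma new_connected V' s : incl V' V -> connected V' (sw_edges s new_edges).
Proof.
  intros IV u v Hu Hv. destruct (old_left_tree s) as [C _].
  set (E := sw_edges s new_edges).
  assert (HM : forall x y, walk (sw_edges s M) x y -> walk E x y)
    by (apply walk_incl; unfold E, new_edges; rewrite sw_edges_app;
        intros e He; apply in_or_app; right; exact He).
  assert (Hba : walk E b a) by (apply walk_edge, in_sw_edges_tensor; simpl; auto).
  assert (Hbota : walk E bot a) by (apply walk_edge, in_sw_edges_tensor; simpl; auto).
  assert (Hqb : walk E q b /\ walk E r b).
  { assert (Hq : walk E q r) by (apply HM, walk_sym, walk_r_q).
    destruct (s b) eqn:Sb;
      [assert (Hr : walk E r b) by (apply walk_edge, in_sw_edges; exists (Some true);
                                    unfold new_edges; simpl; rewrite Sb; auto 6)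
      |assert (Hr : walk E q b) by (apply walk_edge, in_sw_edges; exists (Some false);
                                    unfold new_edges; simpl; rewrite Sb; auto 6)];
      split; eauto using walk_trans, walk_sym. }
  apply (walk_lift ((q, a) :: (r, b) :: (bot, b) :: sw_edges s M) E); [|apply C; auto].
  intros x y [H|[H|[H|H]]]; try (injection H as <- <-); try tauto.
  - apply walk_trans with b; [tauto|exact Hba].
  - apply walk_trans with a; [exact Hbota|apply walk_sym, Hba].
  - apply HM, walk_edge, H.
Qed.

(* Build [new_edges] by adding to the forest [M] the edges [(bot, a)], [(b, a)]
   and the kept child edge of [b]; each joins two different components. *)
Lemma new_acyclic s : acyclic (sw_edges s new_edges).
Proof.
  set (c := if s b then r else q).
  assert (Hc : c <> b /\ ~ walk (sw_edges s M) c a /\ ~ walk (sw_edges s M) c bot).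
  { unfold c; destruct (s b); repeat split; auto.
    - intros W; apply (no_walk_a_r s), walk_sym, W.
    - apply no_walk_r_bot.
    - apply no_walk_q_a.
    - apply no_walk_QN_bot; auto. }
  destruct Hc as [Hcb [Hca Hcbot]].
  assert (P : Permutation ((c, b) :: (b, a) :: (bot, a) :: sw_edges s M) (sw_edges s new_edges)).
  { unfold new_edges, c; rewrite sw_edges_app; unfold sw_edges at 1; simpl.
    destruct (s b); simpl; apply perm_trans with ((b, a) :: (c, b) :: (bot, a) :: sw_edges s M);
      unfold c; auto using perm_swap, perm_skip. }
  apply (acyclic_perm _ _ P).
  apply acyclic_cons_iff; split; [apply acyclic_cons_iff; split; [apply acyclic_cons_iff; split|]|].
  - apply acyclic_M.
  - intros W; apply (no_walk_a_bot s), walk_sym, W.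
  - intros W. apply (walk_app_avoid _ [(bot, a)]) in W.
    + apply (walk_M_from_b s) in W. auto.
    + intros u v [H|[]]; injection H as <- <-; split; apply no_walk_M_b; auto.
  - assert (Ncb : ~ walk (sw_edges s M) c b)
      by (intros W; apply (no_walk_M_b s c Hcb), walk_sym, W).
    intros W. apply (walk_app_avoid _ [(b, a); (bot, a)]) in W; [exact (Ncb W)|].
    intros u v [H|[H|[]]]; injection H as <- <-; auto.
Qed.

Lemma new_tree V' : incl V' V -> sw_tree V' new_edges.
Proof. intros IV s. split; [apply new_connected, IV|apply new_acyclic]. Qed.

Lemma old_rewire_side s u :
  In u QN -> ~ walk (sw_edges s ([(q, a, Some false); (b, a, Some true); (r, b, None)] ++ M)) u bot.
Proof.
  intros Hu W. rewrite sw_edges_app in W. unfold sw_edges at 1 in W; simpl in W.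
  apply walk_sym in W. apply (no_walk_QN_bot s u Hu), walk_sym.
  apply (walk_app_avoid _ (if s a then [(b, a); (r, b)] else [(q, a); (r, b)]));
    [|destruct (s a); exact W].
  assert (Nb : ~ walk (sw_edges s M) bot b)
    by (intros W'; apply (no_walk_M_b s bot bot_neq_b), walk_sym, W').
  assert (Na : ~ walk (sw_edges s M) bot a) by (intros W'; apply (no_walk_a_bot s), walk_sym, W').
  assert (Nr : ~ walk (sw_edges s M) bot r) by (intros W'; apply (no_walk_r_bot s), walk_sym, W').
  assert (Nq : ~ walk (sw_edges s M) bot q)
    by (intros W'; apply (no_walk_QN_bot s q q_in_QN), walk_sym, W').
  destruct (s a); intros x y [H|[H|[]]]; injection H as <- <-; auto.
Qed.

End Rewiring.

(** * The rewiring step next to a cut *)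

Lemma is_linking_rewire Q R k :
  is_linking (LPar Q (LTens R (LLeaf (Bot, k)))) -> is_linking (LTens (LPar Q R) (LLeaf (Bot, k))).
Proof.
  intros HL. inversion HL as [| | | | |? ? HQ HT]; subst.
  inversion HT as [| | |? ? HB|? ? HR|]; subst; [inversion HB|].
  repeat constructor; auto.
Qed.

Lemma lk_edges_parent_sibling p b b' T T' c q l :
  b <> b' -> In (c, q, l) (lk_edges (b :: p) T) -> ~ In q (lk_nodes (b' :: p) T').
Proof.
  intros Hb H Hq. apply lk_edges_shape in H as [_ [Hin [d0 ->]]].
  apply lk_nodes_shape in Hq as [[l' [E _]]|[d E]]; [discriminate|].
  exact (outside_sibling p b b' T d _ Hb Hin [] E).
Qed.

Lemma frame_parent_not_below C G e T c q l :
  In (c, q, l) (frame_edges C G) -> ~ In q (lk_nodes (e ++ hpath C []) T).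
Proof.
  intros H Hq. apply frame_edges_outside in H as [_ [Hout Hnl]].
  apply lk_nodes_shape in Hq as [[l' [-> _]]|[d ->]]; [eapply Hnl; eauto|].
  apply (Hout (d ++ e)). rewrite app_assoc; reflexivity.
Qed.

(* Addresses below the rewired node, read from it: [Q ⅋ (R ⊗ ⊥)] is sent to
   [(Q ⅋ R) ⊗ ⊥]; the last clause, about the leaf [⊥], only makes the map
   invertible. *)
Definition rewire_addr (g : list bool) : list bool :=
  match g with
  | [] => []
  | false :: g' => false :: false :: g'
  | true :: false :: g' => false :: true :: g'
  | [true] => [false]
  | true :: true :: g' => true :: g'
  end.

Definition rewire_addr_inv (g : list bool) : list bool :=
  match g with
  | [] => []
  | false :: false :: g' => false :: g'
  | false :: true :: g' => true :: false :: g'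
  | [false] => [true]
  | true :: g' => true :: true :: g'
  end.

Lemma rewire_addr_invK g : rewire_addr_inv (rewire_addr g) = g.
Proof. destruct g as [|[|] [|[|] g]]; reflexivity. Qed.

Section CutRewiring.

Variables (P : ctx) (Q R : lk) (x : lit) (i j k : nat) (Gamma : sequent).

Local Notation hP := (hpath P []).
Local Notation Qx := (LTens (LLeaf (dual_lit x, j)) Q).
Local Notation Gc := (ICut (FLit (x, i)) (FLit (dual_lit x, j)) :: Gamma).
Local Notation X_old := (LPar Qx (LTens R (LLeaf (Bot, k)))).
Local Notation X_new := (LTens (LPar Qx R) (LLeaf (Bot, k))).
Local Notation top_node := (NLk hP).
Local Notation mid_node := (NLk (false :: hP)).
Local Notation q_root := (NLk (false :: false :: hP)).
Local Notation r_root := (lk_root (true :: false :: hP) R).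
Local Notation bot_node := (NLeaf (Bot, k)).
Local Notation QN := (lk_nodes (false :: false :: hP) Qx).
Local Notation RN := (lk_nodes (true :: false :: hP) R).
Local Notation M :=
  (frame_edges P Gc ++ lk_edges (false :: false :: hP) Qx ++ lk_edges (true :: false :: hP) R).
Local Notation f := (relabel_below rewire_addr hP).

Hypothesis xi_in_R : In (x, i) (lk_leaves R).
Hypothesis old_pg : proof_graph (plug P X_old) Gc.

Lemma relabel_Qx :
  map (relabel_edge f (fun _ => false)) (lk_edges (false :: hP) Qx)
    = lk_edges (false :: false :: hP) Qx /\
  map f (lk_nodes (false :: hP) Qx) = QN.
Proof.
  destruct (relabel_below_subtree rewire_addr hP (fun _ => false) Qx [false] [false; false]
              (fun g => eq_refl) (fun d => eq_refl)) as [E [N _]]; auto.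
Qed.

Lemma relabel_R :
  map (relabel_edge f (fun _ => false)) (lk_edges (false :: true :: hP) R)
    = lk_edges (true :: false :: hP) R /\
  map f (lk_nodes (false :: true :: hP) R) = RN /\ f (lk_root (false :: true :: hP) R) = r_root.
Proof.
  exact (relabel_below_subtree rewire_addr hP (fun _ => false) R [false; true] [true; false]
           (fun g => eq_refl) (fun d => eq_refl)).
Qed.

Lemma old_edges_relabel :
  Permutation (map (relabel_edge f (fun _ => false)) (pg_edges (plug P X_old) Gc))
              (old_edges M top_node mid_node q_root r_root bot_node).
Proof.
  eapply perm_trans; [apply Permutation_map, pg_edges_plug; reflexivity|].
  rewrite map_app, frame_edges_relabel by reflexivity.
  destruct relabel_Qx as [EQ _]. destruct relabel_R as [ER [_ RR]].
  replace (lk_edges hP X_old) with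
    ((NLk (false :: hP), top_node, Some false) :: (NLk (true :: hP), top_node, Some true)
       :: lk_edges (false :: hP) Qx
       ++ (lk_root (false :: true :: hP) R, NLk (true :: hP), None)
       :: (bot_node, NLk (true :: hP), None) :: lk_edges (false :: true :: hP) R ++ [])
    by reflexivity.
  rewrite app_nil_r. cbn [map relabel_edge]. rewrite map_app, EQ. cbn [map relabel_edge].
  rewrite ER, RR, relabel_below_root, !relabel_below_cons by reflexivity.
  cbn [rev rewire_addr app]. unfold old_edges. apply Permutation_sym. cbn [app].
  apply Permutation_cons_app, Permutation_cons_app. rewrite !app_assoc.
  apply Permutation_cons_app, Permutation_cons_app. reflexivity.
Qed.

Lemma new_edges_perm :
  Permutation (pg_edges (plug P X_new) Gc) (new_edges M top_node mid_node q_root r_root bot_node).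
Proof.
  eapply perm_trans; [apply pg_edges_plug; reflexivity|].
  replace (lk_edges hP X_new) with
    ((mid_node, top_node, None) :: (bot_node, top_node, None)
       :: ((q_root, mid_node, Some false) :: (r_root, mid_node, Some true)
             :: lk_edges (false :: false :: hP) Qx ++ lk_edges (true :: false :: hP) R) ++ [])
    by reflexivity.
  rewrite app_nil_r. unfold new_edges. apply Permutation_sym. simpl.
  do 4 apply Permutation_cons_app. reflexivity.
Qed.

Lemma old_nodes_relabel :
  Permutation (map f (pg_nodes (plug P X_old) Gc))
              (frame_nodes P Gc ++ top_node :: QN ++ mid_node :: RN ++ [bot_node]).
Proof.
  eapply perm_trans; [apply Permutation_map, pg_nodes_plug|].
  rewrite map_app, frame_nodes_relabel. apply Permutation_app_head.
  destruct relabel_Qx as [_ NQ]. destruct relabel_R as [_ [NR _]].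
  replace (lk_nodes hP X_old) with
    (NLk hP :: lk_nodes (false :: hP) Qx
       ++ NLk (true :: hP) :: lk_nodes (false :: true :: hP) R ++ [bot_node])
    by reflexivity.
  rewrite map_cons, map_app, map_cons, map_app, NQ, NR, relabel_below_root, relabel_below_cons
    by reflexivity.
  reflexivity.
Qed.

Lemma new_nodes_incl : incl (pg_nodes (plug P X_new) Gc) (map f (pg_nodes (plug P X_old) Gc)).
Proof.
  intros v Hv. apply (Permutation_in _ (pg_nodes_plug _ _ _)) in Hv.
  apply (Permutation_in _ (Permutation_sym old_nodes_relabel)).
  change (lk_nodes hP X_new) with (top_node :: (mid_node :: QN ++ RN) ++ [bot_node]) in Hv.
  repeat progress (rewrite ?in_app_iff in *; cbn [In] in * ). tauto.
Qed.

Lemma cut_M_avoid c p l : In (c, p, l) M -> c <> mid_node /\ p <> mid_node /\ p <> top_node.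
Proof.
  intros H. apply in_app_or in H as [H|H].
  - apply frame_edges_outside in H as [Hc [Hp _]].
    split; [|exact (conj (Hp [false]) (Hp []))].
    destruct Hc as [->|Hc]; [apply not_eq_sym, (lk_below_neq [])|exact (Hc [false])].
  - apply in_app_or in H as [H|H]; apply lk_edges_shape in H as [Hc [Hp _]];
      repeat split; eapply lk_nodes_neq_short; eauto; simpl; lia.
Qed.

Lemma cut_M_closed_Q c p l : In (c, p, l) M -> In p QN -> In c QN.
Proof.
  intros H Hp. apply in_app_or in H as [H|H];
    [contradiction (frame_parent_not_below P Gc [false; false] Qx c p l H Hp)|].
  apply in_app_or in H as [H|H]; [apply lk_edges_shape in H; tauto|].
  contradiction (lk_edges_parent_sibling (false :: hP) true false R Qx c p l
                   ltac:(discriminate) H Hp).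
Qed.

Lemma cut_M_closed_R c p l : In (c, p, l) M -> In p RN -> In c RN.
Proof.
  intros H Hp. apply in_app_or in H as [H|H];
    [contradiction (frame_parent_not_below P Gc [true; false] R c p l H Hp)|].
  apply in_app_or in H as [H|H]; [|apply lk_edges_shape in H; tauto].
  contradiction (lk_edges_parent_sibling (false :: hP) false true Qx R c p l
                   ltac:(discriminate) H Hp).
Qed.

Lemma bot_notin_subtrees : ~ In bot_node QN /\ ~ In bot_node RN.
Proof.
  destruct old_pg as [_ [_ [ND _]]]. apply NoDup_lk_leaves_plug in ND.
  change (NoDup (lk_leaves Qx ++ lk_leaves R ++ [(Bot, k)])) in ND.
  rewrite app_assoc in ND. apply NoDup_remove_2 in ND. rewrite app_nil_r, in_app_iff in ND.
  split; intros H; apply lk_nodes_shape in H as [[l [E Hl]]|[d E]]; try discriminate;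
    injection E as <-; tauto.
Qed.

(* A walk from [⊥] into [x_j^⊥ ⊗ Q] can be redirected to the root of that
   subtree, then through [x_j^⊥] and the cut to [x_i], and up to the root of [R]. *)
Lemma cut_bot_to_Q s u :
  In u QN -> walk (sw_edges s M) bot_node u -> exists s', walk (sw_edges s' M) bot_node r_root.
Proof.
  intros Hu W. destruct bot_notin_subtrees as [NQ NR].
  destruct (walk_into_subtree M (false :: false :: hP) Qx s bot_node u cut_M_closed_Q) as [s1 W1];
    auto; [intros e He; apply in_or_app; right; apply in_or_app; auto|].
  assert (W2 : walk (sw_edges s1 M) bot_node (NLeaf (x, i))).
  { assert (Hin : forall e, In e (seq_edges 0 Gc) -> In e M)
      by (intros e He; apply in_or_app; left; apply in_or_app; auto).
    apply walk_trans with q_root; [exact W1|].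
    apply walk_trans with (NLeaf (dual_lit x, j));
      [apply walk_sym, walk_edge, in_sw_edges_tensor, in_or_app; right;
       apply in_or_app; simpl; auto|].
    apply walk_trans with (NSq 0 []); [apply walk_edge, in_sw_edges_tensor, Hin; simpl; auto|].
    apply walk_sym, walk_edge, in_sw_edges_tensor, Hin; simpl; auto. }
  destruct (walk_into_subtree M (true :: false :: hP) R s1 bot_node (NLeaf (x, i)) cut_M_closed_R)
    as [s2 W3]; eauto using leaf_in_lk_nodes.
  intros e He; apply in_or_app; right; apply in_or_app; auto.
Qed.

Lemma old_tree_relabel : sw_tree (map f (pg_nodes (plug P X_old) Gc))
                                 (old_edges M top_node mid_node q_root r_root bot_node).
Proof.
  destruct old_pg as [_ [_ [_ [_ T]]]].
  apply (sw_tree_relabel (pg_nodes (plug P X_old) Gc) (pg_edges (plug P X_old) Gc) _ _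
           f (relabel_below rewire_addr_inv hP) (fun _ => false));
    [intros v; apply relabel_below_inv, rewire_addr_invK
    |apply Permutation_sym, old_edges_relabel
    |apply incl_refl
    |exact T].
Qed.

Lemma rewire_cut_sw_tree : sw_tree (pg_nodes (plug P X_new) Gc) (pg_edges (plug P X_new) Gc).
Proof.
  assert (Hin : forall v, In v (top_node :: QN ++ mid_node :: RN ++ [bot_node]) ->
                          In v (map f (pg_nodes (plug P X_old) Gc)))
    by (intros v Hv; eapply Permutation_in; [apply Permutation_sym, old_nodes_relabel|];
        apply in_or_app; right; exact Hv).
  apply (sw_tree_perm _ _ _ _ (Permutation_sym new_edges_perm) (incl_refl _)).
  apply (new_tree M top_node mid_node q_root r_root bot_node
                  (map f (pg_nodes (plug P X_old) Gc)) QN cut_M_avoid);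
    [apply not_eq_sym, (lk_below_neq [])
    |exact (lk_below_neq [] false (false :: hP))
    |discriminate
    |apply (lk_nodes_neq_short _ _ _ _ (lk_root_in _ _)); simpl; lia
    |exact old_tree_relabel
    |apply Hin; right; rewrite in_app_iff; right; right; rewrite in_app_iff; left; apply lk_root_in
    |apply Hin; left; reflexivity
    |exact (lk_root_in (false :: false :: hP) Qx)
    |exact cut_bot_to_Q
    |exact new_nodes_incl].
Qed.

Lemma rewire_cut_proof_graph : proof_graph (plug P X_new) Gc.
Proof.
  destruct old_pg as [L [Wf [ND [PL _]]]].
  assert (PX : Permutation (lk_leaves (plug P X_old)) (lk_leaves (plug P X_new)))
    by (apply Permutation_lk_leaves_plug; cbn [lk_leaves]; rewrite <- !app_assoc; reflexivity).
  split; [|split; [exact Wf|split; [|split]]].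
  - exact (is_linking_plug P X_old X_new eq_refl (is_linking_rewire Qx R k) L).
  - eapply Permutation_NoDup; eauto.
  - eapply Permutation_trans; [apply Permutation_sym|]; eauto.
  - exact rewire_cut_sw_tree.
Qed.

Lemma ext_sw_edges_relabel s :
  incl (map (pair_map f) (ext_sw_edges s k (plug P X_old) Gc))
       (sw_edges (fun v => s (relabel_below rewire_addr_inv hP v))
          ([(q_root, top_node, Some false); (mid_node, top_node, Some true);
            (r_root, mid_node, None)] ++ M)).
Proof.
  unfold ext_sw_edges. rewrite <- sw_edges_app.
  set (t := fun v => s (relabel_below rewire_addr_inv hP v)).
  rewrite (sw_edges_ext (fun v => xorb false (t (f v))) s)
    by (intros; unfold t; simpl; rewrite relabel_below_inv; auto using rewire_addr_invK).
  rewrite <- sw_edges_relabel. apply sw_edges_incl. intros e' He'.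
  apply in_map_iff in He' as [[[c p] l] [<- He]].
  assert (Hold : In (relabel_edge f (fun _ => false) (c, p, l))
                    (old_edges M top_node mid_node q_root r_root bot_node)).
  { apply (Permutation_in _ old_edges_relabel), in_map. unfold pg_edges.
    apply in_app_or in He as [He|He]; apply in_or_app; [left; apply filter_In in He|right]; tauto. }
  destruct Hold as [E|[E|[E|[E|E]]]];
    [left|right; left|right; right; left|exfalso|right; right; right]; auto.
  injection E as Ebot Emid _.
  apply in_app_or in He as [He|He].
  - apply filter_In in He as [_ Hc].
    apply (f_equal (relabel_below rewire_addr_inv hP)) in Ebot.
    rewrite relabel_below_inv in Ebot by apply rewire_addr_invK. cbn in Ebot. subst c.
    cbn -[node_eq_dec] in Hc. destruct node_eq_dec; congruence.
  - apply seq_edges_ends in He as [_ [m [z ->]]]. discriminate.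
Qed.

Lemma rewire_cut_side : rewire_side P Qx R k Gc.
Proof.
  intros s u Hu W.
  apply (old_rewire_side M top_node mid_node q_root r_root bot_node _ QN cut_M_avoid
           ltac:(discriminate) old_tree_relabel (lk_root_in (false :: false :: hP) Qx)
           cut_bot_to_Q (fun v => s (relabel_below rewire_addr_inv hP v)) (f u)).
  - destruct relabel_Qx as [_ NQ]. rewrite <- NQ. apply in_map, Hu.
  - eapply walk_incl; [apply ext_sw_edges_relabel|exact (walk_map f _ _ _ W)].
Qed.

Lemma pg_step_rewire_cut : pg_step (plug P X_old, Gc) (plug P X_new, Gc).
Proof.
  split; [reflexivity|split; [exact old_pg|split; [exact rewire_cut_proof_graph|]]].
  apply st_rewire, rewire_cut_side.
Qed.

End CutRewiring.

Theorem lemma1p20 (P R : ctx) (Q : lk) (x : lit) (i j k : nat) (Gamma : sequent) :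
  atom_or_unit x ->
  proof_graph
    (plug P (LPar (LTens (LLeaf (Bot, k)) (plug R (LLeaf (x, i))))
                  (LTens (LLeaf (dual_lit x, j)) Q)))
    (ICut (FLit (x, i)) (FLit (dual_lit x, j)) :: Gamma) ->
  pg_equiv
    (plug P (LPar (LTens (LLeaf (Bot, k)) (plug R (LLeaf (x, i))))
                  (LTens (LLeaf (dual_lit x, j)) Q)),
     ICut (FLit (x, i)) (FLit (dual_lit x, j)) :: Gamma)
    (plug P (LTens (LLeaf (Bot, k))
                   (LPar (plug R (LLeaf (x, i))) (LTens (LLeaf (dual_lit x, j)) Q))),
     ICut (FLit (x, i)) (FLit (dual_lit x, j)) :: Gamma).
Proof.
  (* Nothing is assumed about [x]: only the cut between [x_i] and [x_j^⊥] is used. *)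
  intros _ H0.
  set (G := ICut (FLit (x, i)) (FLit (dual_lit x, j)) :: Gamma).
  set (B := LLeaf (Bot, k)). set (Rx := plug R (LLeaf (x, i))).
  set (Qx := LTens (LLeaf (dual_lit x, j)) Q).
  assert (xi_in_Rx : In (x, i) (lk_leaves Rx)) by (apply in_lk_leaves_plug; left; reflexivity).
  pose proof (pg_step_swap P (CParL Hole Qx) G false B Rx H0) as S1.
  pose proof (pg_step_swap P Hole G true (LTens Rx B) Qx (pg_step_target _ _ S1)) as S2.
  pose proof (pg_step_rewire_cut P Q Rx x i j k Gamma xi_in_Rx (pg_step_target _ _ S2)) as S3.
  pose proof (pg_step_swap P (CTensL Hole B) G true Qx Rx (pg_step_target _ _ S3)) as S4.
  pose proof (pg_step_swap P Hole G false (LPar Rx Qx) B (pg_step_target _ _ S4)) as S5.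
  eapply rst_trans; [apply rst_step, S1|].
  eapply rst_trans; [apply rst_step, S2|].
  eapply rst_trans; [apply rst_step, S3|].
  eapply rst_trans; [apply rst_step, S4|].
  apply rst_step, S5.
Qed.
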